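(* For each $n\ge1$, there are exactly $n$ pairwise non-isomorphic digraphs whose $H$-spectrum equals that of $\overleftrightarrow{K_n}$, namely $\overleftrightarrow{K_n}$ and $Y_{a,n-a}$ for $a=1,\dots,n-1$.
   Context: A digraph has a finite vertex set and an arc set of ordered pairs of distinct vertices; $\{x,y\}$ is a digon if both $xy,yx$ are arcs. $H(X)$ has $(u,v)$-entry $1$ if $uv$ and $vu$ are arcs, $i$ if only $uv$ is an arc, $-i$ if only $vu$ is an arc, and $0$ otherwise; the $H$-spectrum is the multiset of eigenvalues of $H(X)$. $\overleftrightarrow{K_n}$ is the complete digraph on $n$ vertices (every pair of vertices forms a digon), so $H(\overleftrightarrow{K_n})$ is the adjacency matrix of $K_n$. For $1\le a\le n-1$, $Y_{a,n-a}$ is the digraph on a vertex set $A\cup B$ with $|A|=a$, $|B|=n-a$, in which every pair inside $A$ and every pair inside $B$ forms a digon, and for every $u\in A$, $v\in B$ there is the single arc $uv$ (and not $vu$). *)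

From HB Require Import structures.
From mathcomp Require Import all_boot all_order all_algebra all_field.
Set Implicit Arguments. Unset Strict Implicit. Unset Printing Implicit Defensive.
Import Order.TTheory GRing.Theory Num.Theory.
Local Open Scope ring_scope.

Definition is_digraph (m : nat) (arc : rel 'I_m) : Prop := irreflexive arc.

Definition Hmx (m : nat) (arc : rel 'I_m) : 'M[algC]_m :=
  \matrix_(u, v)
    (if arc u v && arc v u then 1
     else if arc u v then 'i
     else if arc v u then - 'i
     else 0).

Definition Hspectrum (m : nat) (arc : rel 'I_m) : algC -> nat :=
  fun z => mup z (char_poly (Hmx arc)).

Definition digraph_iso (m k : nat) (arc1 : rel 'I_m) (arc2 : rel 'I_k) : Prop :=
  exists f : 'I_m -> 'I_k, bijective f /\ forall u v, arc1 u v = arc2 (f u) (f v).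

Definition Kn (n : nat) : rel 'I_n := fun u v => u != v.

(* Y_{a,n-a} on vertex set 'I_n, with A = {i | i < a}, B = {i | a <= i}:
   digons inside A and inside B, single arcs from A to B. *)
Definition Yarc (n a : nat) : rel 'I_n :=
  fun u v => (u != v) && (((u < a)%N == (v < a)%N) || ((u < a)%N && (a <= v)%N)).
Arguments Kn n : clear implicits.
Arguments Yarc n a : clear implicits.

From HB Require Import structures.
From mathcomp Require Import all_boot all_order all_algebra all_field.
From mathcomp Require Import ring zify.
Set Implicit Arguments. Unset Strict Implicit. Unset Printing Implicit Defensive.
Import Order.TTheory GRing.Theory Num.Theory.
Local Open Scope ring_scope.

(* If X is H-cospectral with K_n, then H(X) is a Hermitian matrix whose only
   eigenvalues are n-1 and -1, so by the spectral theorem M := H(X) + I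
   satisfies M^2 = nM. The diagonal of M is 1 and its entries have modulus at
   most 1, so the diagonal of M^2 = nM forces all entries to be unimodular;
   the equality case of Cauchy-Schwarz in (M^2)_uw = n M_uw then gives
   M = v v^* for the column v of any fixed vertex. The entries of v lie in
   {1, i, -i}, and i and -i cannot both occur (else -1 would be an entry of M);
   after rescaling v by a unimodular constant it takes values in {1, i}, and
   the vertices where v = i form the block A of some Y_{a,n-a}, or X = K_n if
   v is constant. Conversely, H(Y_{a,n-a}) is conjugate to H(K_n) by the
   diagonal unitary matrix with entries 1 on A and -i on B, and the number of
   tails of single arcs tells K_n and the Y_{a,n-a} apart. *)

Lemma char_poly_similar (R : comNzRingType) n (A P Q : 'M[R]_n) :
  P *m Q = 1%:M -> char_poly (P *m A *m Q) = char_poly A.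
Proof.
move=> PQ; have eX : char_poly_mx (P *m A *m Q) =
    map_mx polyC P *m char_poly_mx A *m map_mx polyC Q.
  rewrite /char_poly_mx mulmxBr mulmxBl !map_mxM; congr (_ - _).
  rewrite mul_mx_scalar -scalemxAl -map_mxM PQ.
  by rewrite map_scalar_mx scale_scalar_mx mulr1.
rewrite /char_poly eX !det_mulmx !det_map_mx mulrC mulrA -rmorphM.
by rewrite [\det Q * _]mulrC -det_mulmx PQ det1 mul1r.
Qed.

Lemma monic_eq_mup (F : closedFieldType) (p q : {poly F}) :
  p \is monic -> q \is monic -> (forall z, mup z p = mup z q) -> p = q.
Proof.
move=> /monicP p1 /monicP q1 eq_mup.
have [s ps] := closed_field_poly_normal p; rewrite p1 scale1r in ps.
have [t qt] := closed_field_poly_normal q; rewrite q1 scale1r in qt.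
rewrite ps qt; apply: perm_big; apply/allP => z _.
by have := eq_mup z; rewrite ps qt !mu_prod_XsubC /= => ->.
Qed.

Lemma root_char_poly_annihilator (F : fieldType) n (A : 'M[F]_n.+1) p z :
  horner_mx A p = 0 -> root (char_poly A) z -> root p z.
Proof. by move/mxminpoly_min/root_dvdp => pz; rewrite -root_mxminpoly => /pz. Qed.

Lemma normalmx_two_eigenvalues (C : numClosedFieldType) n (A : 'M[C]_n) a b :
  A \is normalmx -> (forall z, root (char_poly A) z -> z = a \/ z = b) ->
  (A - a%:M) *m (A - b%:M) = 0.
Proof.
move=> /orthomx_spectralP; set P := spectralmx A; set d := spectral_diag A.
move=> eA hroot; have VP : invmx P *m P = 1%:M := mulVmx (spectral_unit A).
have PV : P *m invmx P = 1%:M := mulmxV (spectral_unit A).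
have d_ab i : d 0 i = a \/ d 0 i = b.
  apply: hroot; rewrite eA char_poly_similar // char_poly_trig ?diag_mx_is_trig //.
  rewrite -(big_map (fun j => diag_mx d j j) xpredT (fun z => 'X - z%:P)).
  rewrite root_prod_XsubC; apply/mapP.
  by exists i; rewrite ?mem_index_enum ?mxE ?eqxx.
have shift c : A - c%:M = invmx P *m (diag_mx d - c%:M) *m P.
  by rewrite mulmxBr mulmxBl mul_mx_scalar -scalemxAl VP scalemx1 -eA.
rewrite !shift !mulmxA -(mulmxA _ P) PV mulmx1 -(mulmxA (invmx P)).
suff -> : (diag_mx d - a%:M) *m (diag_mx d - b%:M) = 0 by rewrite mulmx0 mul0mx.
rewrite -!diag_const_mx -!raddfB mulmx_diag -(linear0 (@diag_mx C n)); congr diag_mx.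
by apply/rowP => i; rewrite !mxE; case: (d_ab i) => ->; rewrite subrr ?mulr0 ?mul0r.
Qed.

Section RankOneUnimodular.
Variables (C : numClosedFieldType) (n : nat) (M : 'M[C]_n).
Hypothesis M_herm : forall u w, M w u = (M u w)^*.
Hypothesis M_diag : forall u, M u u = 1.
Hypothesis M_le1 : forall u w, M u w * (M u w)^* <= 1.
Hypothesis M_sqr : M *m M = n%:R *: M.

Lemma M_sqr_entry u w : \sum_k M u k * M k w = n%:R * M u w.
Proof. by have /matrixP/(_ u w) := M_sqr; rewrite !mxE. Qed.

Lemma entry_norm1 u w : M u w * (M u w)^* = 1.
Proof.
have sum0 : \sum_k (1 - M u k * (M u k)^*) = 0.
  under eq_bigr do rewrite -M_herm.
  by rewrite sumrB sumr_const card_ord M_sqr_entry M_diag mulr1 subrr.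
have ge0 k : true -> 0 <= 1 - M u k * (M u k)^* by rewrite subr_ge0.
have /eqP := psumr_eq0P ge0 sum0 (i := w) isT.
by rewrite subr_eq0 eq_sym => /eqP.
Qed.

(* Summing |M u k M k w - M u w|^2 over k gives 2n - 2n = 0. *)
Lemma entry_factor u k w : M u k * M k w = M u w.
Proof.
pose z j := M u j * M j w; set c := M u w.
have zz j : z j * (z j)^* = 1 by rewrite rmorphM mulrACA !entry_norm1 mulr1.
have cc : c * c^* = 1 := entry_norm1 u w.
have sz : \sum_j z j = n%:R * c := M_sqr_entry u w.
have sum0 : \sum_j (z j - c) * (z j - c)^* = 0.
  have -> : \sum_j (z j - c) * (z j - c)^* =
      \sum_j (z j * (z j)^* + c * c^*) - ((\sum_j z j) * c^* + c * (\sum_j z j)^*).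
    rewrite rmorph_sum mulr_suml mulr_sumr -big_split -sumrB /=.
    by apply: eq_bigr => j _; rewrite rmorphB; ring.
  under eq_bigr do rewrite zz cc.
  rewrite sumr_const card_ord sz rmorphM /= conjC_nat.
  have -> : n%:R * c * c^* + c * (n%:R * c^*) = n%:R * (c * c^*) *+ 2 by ring.
  by rewrite cc mulr1; ring.
have := psumr_eq0P (fun j _ => mul_conjC_ge0 (z j - c)) sum0 (i := k) isT.
by move/eqP; rewrite mul_conjC_eq0 subr_eq0 => /eqP.
Qed.

End RankOneUnimodular.

Lemma i_neq1 : 'i != 1 :> algC.
Proof. by apply: contraNneq (@nonRealCi algC) => ->; rewrite real1. Qed.

Lemma i_neqN1 : 'i != -1 :> algC.
Proof. by apply: contraNneq (@nonRealCi algC) => ->; rewrite realN real1. Qed.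

Lemma i_neqNi : 'i != - 'i :> algC.
Proof. by rewrite -subr_eq0 opprK -mulr2n mulrn_eq0 negb_or neq0Ci. Qed.

Lemma Hmx_herm m (arc : rel 'I_m) u w : Hmx arc w u = (Hmx arc u w)^*.
Proof.
rewrite !mxE; case: (arc u w); case: (arc w u) => /=.
all: by rewrite ?conjC1 ?conjC0 ?conjCi ?opprK // rmorphN /= conjCi opprK.
Qed.

Lemma Hmx_hermsymmx m (arc : rel 'I_m) : Hmx arc \is hermsymmx.
Proof.
apply/is_hermitianmxP; rewrite expr0 scale1r; apply/matrixP => u w.
by rewrite [RHS]mxE [in RHS]mxE -Hmx_herm.
Qed.

Lemma Hmx_entry m (arc : rel 'I_m) u w :
  Hmx arc u w \in [:: 1; 'i; - 'i; 0].
Proof. by rewrite mxE; case: (arc u w); case: (arc w u); rewrite !inE eqxx ?orbT. Qed.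

Lemma arc_Hmx m (arc : rel 'I_m) u w :
  arc u w = (Hmx arc u w == 1) || (Hmx arc u w == 'i).
Proof.
rewrite mxE; case: (arc u w); case: (arc w u); rewrite /= ?eqxx ?orbT //.
- by rewrite eqr_oppLR (negPf i_neqN1) eq_sym (negPf i_neqNi).
- by rewrite eq_sym oner_eq0 eq_sym (negPf (@neq0Ci algC)).
Qed.

Definition Yscale n a : 'rV[algC]_n := \row_u (if (u < a)%N then 1 else - 'i).

Lemma Yscale_unitary n a :
  diag_mx (Yscale n a) *m diag_mx (map_mx Num.conj (Yscale n a)) = 1%:M.
Proof.
rewrite mulmx_diag -diag_const_mx; congr diag_mx; apply/rowP => u.
rewrite !mxE; case: ifP; rewrite ?conjC1 ?mulr1 //.
by rewrite rmorphN /= conjCi opprK mulNr mulCii opprK.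
Qed.

Lemma Hmx_Yarc n a : Hmx (Yarc n a) =
  diag_mx (Yscale n a) *m Hmx (Kn n) *m diag_mx (map_mx Num.conj (Yscale n a)).
Proof.
rewrite mul_diag_mx mul_mx_diag; apply/matrixP => u w.
rewrite !mxE /Yarc /Kn.
have [->|uw] := eqVneq u w; first by rewrite /= mulr0 mul0r.
case: (ltnP u a) => ua; case: (ltnP w a) => wa.
all: rewrite /= ?mulr1 ?mul1r ?conjC1 ?mulr1 //.
all: by rewrite rmorphN /= conjCi opprK ?mulNr ?mulCii ?opprK.
Qed.

Lemma Yarc_cospectral n a : Hspectrum (Yarc n a) =1 Hspectrum (Kn n).
Proof. by move=> z; rewrite /Hspectrum Hmx_Yarc char_poly_similar // Yscale_unitary. Qed.

Definition single_arc_tails m (arc : rel 'I_m) : {set 'I_m} :=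
  [set u | [exists v, arc u v && ~~ arc v u]].

Lemma card_single_arc_tails_iso m k (arc1 : rel 'I_m) (arc2 : rel 'I_k) :
  digraph_iso arc1 arc2 -> #|single_arc_tails arc1| = #|single_arc_tails arc2|.
Proof.
move=> [f [[g fK gK] arcE]].
have -> : single_arc_tails arc2 = f @: single_arc_tails arc1.
  apply/setP => u; rewrite -{2}(gK u) mem_imset ?inE; last exact: can_inj fK.
  apply/existsP/existsP => [[v hv]|[v]]; first by exists (g v); rewrite !arcE !gK.
  by rewrite !arcE gK; exists (f v).
by rewrite card_imset //; apply: can_inj fK.
Qed.

Lemma single_arc_tails_Kn n : single_arc_tails (Kn n) = set0.
Proof.
by apply/setP => u; rewrite !inE; apply/existsP => -[v]; rewrite /Kn eq_sym andbN.
Qed.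

Lemma single_arc_tails_Yarc n a : (a < n)%N ->
  single_arc_tails (Yarc n a) = [set u : 'I_n | (u < a)%N].
Proof.
move=> an; apply/setP => u; rewrite !inE /Yarc; apply/existsP/idP => [[v]|ua].
  rewrite (eq_sym v); case: (u =P v) => //= _.
  by case: (ltnP u a); case: (ltnP v a).
have last_lt : (n.-1 < n)%N by rewrite ltn_predL (leq_ltn_trans _ an).
have a_le : (a <= n.-1)%N by rewrite -ltnS (ltn_predK an).
exists (Ordinal last_lt).
by rewrite -!val_eqE /= ua ltnNge a_le /= andbF andbT neq_ltn (leq_trans ua a_le).
Qed.

Lemma card_ord_lt n a : (a <= n)%N -> #|[set u : 'I_n | (u < a)%N]| = a.
Proof.
move=> an; have -> : [set u : 'I_n | (u < a)%N] = widen_ord an @: [set: 'I_a].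
  apply/setP => u; rewrite !inE.
  apply/idP/imsetP => [ua|[i _ ->]]; last by rewrite /= ltn_ord.
  by exists (Ordinal ua); rewrite ?inE //; apply: val_inj.
by rewrite card_imset ?cardsT ?card_ord // => i j /(congr1 val) /= e; apply: val_inj.
Qed.

Definition two_block_arc n (A : {set 'I_n}) : rel 'I_n :=
  fun u w => (u != w) && (((u \in A) == (w \in A)) || (u \in A) && (w \notin A)).

(* The isomorphism lists the vertices of A first, then those of its complement. *)
Lemma two_block_iso_Yarc n (arc : rel 'I_n) (A : {set 'I_n}) x y :
  arc =2 two_block_arc A -> x \in A -> y \in ~: A -> digraph_iso arc (Yarc n #|A|).
Proof.
move=> arcE xA yA; have cardA : (#|A| + #|~: A| = n)%N by rewrite cardsC card_ord.
pose f u : 'I_n := cast_ord cardA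
  (if u \in A then lshift _ (enum_rank_in xA u) else rshift _ (enum_rank_in yA u)).
have fE u : val (f u) =
    if u \in A then val (enum_rank_in xA u) else (#|A| + enum_rank_in yA u)%N.
  by rewrite /f; case: (u \in A).
have fA u : (f u < #|A|)%N = (u \in A).
  by rewrite fE; case: ifP => _; rewrite ?ltn_ord // ltnNge leq_addr.
have f_inj : injective f.
  move=> u w /(congr1 val); rewrite !fE.
  case uA: (u \in A); case wA: (w \in A).
  - by move/val_inj/(congr1 enum_val); rewrite !enum_rankK_in.
  - by move=> e; have := ltn_ord (enum_rank_in xA u); rewrite e ltnNge leq_addr.
  - by move=> e; have := ltn_ord (enum_rank_in xA w); rewrite -e ltnNge leq_addr.
  have [uA' wA'] : u \in ~: A /\ w \in ~: A by rewrite !inE uA wA.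
  by move/addnI/val_inj/(congr1 enum_val); rewrite !enum_rankK_in.
exists f; split; first exact: injF_bij.
by move=> u w; rewrite arcE /two_block_arc /Yarc (inj_eq f_inj) !fA leqNgt fA.
Qed.

Lemma two_block_iso n (arc : rel 'I_n) (A : {set 'I_n}) :
  arc =2 two_block_arc A -> digraph_iso arc (Kn n) \/
  exists a, (1 <= a <= n - 1)%N /\ digraph_iso arc (Yarc n a).
Proof.
move=> arcE; case: (boolP ([exists x, x \in A] && [exists y, y \in ~: A])).
  case/andP=> /existsP[x xA] /existsP[y yA]; right; exists #|A|.
  split; last exact: two_block_iso_Yarc arcE xA yA.
  have := cardsC A; rewrite card_ord => cardA.
  have /card_gt0P A_gt0 : exists x, x \in A by exists x.
  have /card_gt0P B_gt0 : exists y, y \in ~: A by exists y.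
  by move: A_gt0 B_gt0 cardA; lia.
rewrite negb_and !negb_exists => A_trivial.
left; exists id; split; first by exists id.
move=> u w; rewrite arcE /two_block_arc /Kn.
suff -> : (u \in A) = (w \in A) by rewrite eqxx /= andbT.
case/orP: A_trivial => /forallP A_triv; move: (A_triv u) (A_triv w).
all: by rewrite ?inE; do 2 case: (_ \in A).
Qed.

Lemma cospectral_char_poly m k (arc1 : rel 'I_m) (arc2 : rel 'I_k) :
  Hspectrum arc1 =1 Hspectrum arc2 -> char_poly (Hmx arc1) = char_poly (Hmx arc2).
Proof. by move=> eq_spec; apply: monic_eq_mup; rewrite ?char_poly_monic. Qed.

Lemma Hmx_Kn n : Hmx (Kn n) = const_mx 1 - 1%:M.
Proof.
by apply/matrixP => u w; rewrite !mxE /Kn eq_sym; case: eqP; rewrite ?subrr ?subr0.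
Qed.

Lemma root_char_poly_Kn n z :
  root (char_poly (Hmx (Kn n.+1))) z -> z = n%:R \/ z = -1.
Proof.
pose J : 'M[algC]_n.+1 := const_mx 1.
have J_sqr : J *m J = n.+1%:R *: J.
  apply/matrixP => u w; rewrite !mxE.
  by under eq_bigr do rewrite !mxE mulr1; rewrite sumr_const card_ord mulr1.
have ann : horner_mx (Hmx (Kn n.+1)) (('X - n%:R%:P) * ('X + 1)) = 0.
  rewrite rmorphM rmorphB rmorphD rmorph1 /= horner_mx_X horner_mx_C.
  rewrite Hmx_Kn -/J subrK.
  rewrite -mulmxE !mulmxBl J_sqr mul1mx mul_scalar_mx -natr1 scalerDl scale1r.
  by rewrite addrK subrr.
move/(root_char_poly_annihilator ann).
by rewrite rootM root_XsubC /root !hornerE addr_eq0 => /orP[] /eqP; [left | right].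
Qed.

Lemma Kn_cospectral_sqr n (arc : rel 'I_n.+1) :
  char_poly (Hmx arc) = char_poly (Hmx (Kn n.+1)) ->
  (Hmx arc + 1%:M) *m (Hmx arc + 1%:M) = n.+1%:R *: (Hmx arc + 1%:M).
Proof.
move=> eq_char; have := normalmx_two_eigenvalues (a := n%:R) (b := -1)
  (hermitian_normalmx (Hmx_hermsymmx arc)).
rewrite eq_char raddfN /= opprK => /(_ (@root_char_poly_Kn n))/eqP.
have -> : Hmx arc - n%:R%:M = Hmx arc + 1%:M - n.+1%:R%:M.
  by rewrite -natr1 raddfD /= opprD addrA addrAC addrK.
by rewrite mulmxBl mul_scalar_mx subr_eq0 => /eqP.
Qed.

Section KnCospectralStructure.
Variables (n : nat) (arc : rel 'I_n.+1).
Hypothesis arc_irr : is_digraph arc.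
Let M := Hmx arc + 1%:M.
Hypothesis M_sqr : M *m M = n.+1%:R *: M.

Lemma M_offdiag u w : u != w -> M u w = Hmx arc u w.
Proof. by move=> uw; rewrite !mxE (negPf uw) addr0. Qed.

Lemma M_diag u : M u u = 1.
Proof. by rewrite !mxE arc_irr eqxx add0r. Qed.

Lemma M_herm u w : M w u = (M u w)^*.
Proof.
rewrite mxE [M u w]mxE Hmx_herm rmorphD; congr (_ + _).
by rewrite !mxE rmorphMn /= conjC1 eq_sym.
Qed.

Lemma M_entry u w : M u w \in [:: 1; 'i; - 'i; 0].
Proof.
have [<-|uw] := eqVneq u w; first by rewrite M_diag inE eqxx.
by rewrite M_offdiag // Hmx_entry.
Qed.

Lemma M_entry_le1 u w : M u w * (M u w)^* <= 1.
Proof.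
rewrite -normCK; have := M_entry u w; rewrite !inE => /or4P[] /eqP ->.
all: by rewrite ?normrN ?normCi ?normr1 ?normr0 ?expr1n ?expr0n ?ler01.
Qed.

Lemma M_norm1 u w : M u w * (M u w)^* = 1.
Proof. exact: entry_norm1 M_herm M_diag M_entry_le1 M_sqr u w. Qed.

Lemma M_factor u w : M u w = M u ord0 * (M w ord0)^*.
Proof. by rewrite -M_herm (entry_factor M_herm M_diag M_entry_le1 M_sqr). Qed.

Lemma M_col_entry u : M u ord0 \in [:: 1; 'i; - 'i].
Proof.
have := M_entry u ord0; rewrite !inE => /or4P[-> //|-> |-> |/eqP M0]; rewrite ?orbT //.
by have := M_norm1 u ord0; rewrite M0 mul0r => /eqP; rewrite eq_sym oner_eq0.
Qed.

Lemma M_neqN1 u w : M u w != -1.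
Proof.
apply: contraTneq (M_entry u w) => ->; rewrite !inE eqr_opp oppr_eq0 oner_eq0.
rewrite !(eq_sym _ 'i) (negPf i_neq1) (negPf i_neqN1) (eq_sym (-1)).
by rewrite -addr_eq0 -mulr2n pnatr_eq0.
Qed.

Lemma arc_two_blocks : exists A, arc =2 two_block_arc A.
Proof.
(* Rescaling the column by 'i when -'i occurs brings all its entries into {1, 'i}. *)
pose flip := [exists u, M u ord0 == - 'i].
pose x u := if flip then 'i * M u ord0 else M u ord0.
have x_factor u w : M u w = x u * (x w)^*.
  rewrite M_factor /x; case: ifP => _ //.
  by rewrite rmorphM /= conjCi mulrACA mulrN mulCii opprK mul1r.
have x_vals u : (x u == 1) || (x u == 'i).
  have := M_col_entry u; rewrite /x !inE.
  case: ifP => [/existsP[u0 /eqP Mu0]|/negbT/existsPn noNi].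
    case/or3P=> /eqP Mu; rewrite Mu ?mulr1 ?eqxx ?orbT //.
      have := M_neqN1 u u0.
      by rewrite M_factor Mu Mu0 rmorphN /= conjCi opprK mulCii eqxx.
    by rewrite mulrN mulCii opprK eqxx.
  case/or3P=> /eqP Mu; rewrite Mu ?eqxx ?orbT //.
  by have := noNi u; rewrite Mu eqxx.
exists [set u | x u == 'i] => u w; rewrite /two_block_arc !inE.
have [<-|uw] := eqVneq u w; first by rewrite arc_irr.
rewrite arc_Hmx -M_offdiag // x_factor.
case/orP: (x_vals u) => /eqP ->; case/orP: (x_vals w) => /eqP ->.
all: rewrite ?conjC1 ?conjCi ?mulr1 ?mulrN ?mul1r ?mulCii ?opprK !eqxx.
all: rewrite ?(eqr_oppLR 'i 1) ?(eq_sym (- 'i) 'i) ?(eq_sym 1 'i).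
all: by rewrite ?(negPf i_neq1) ?(negPf i_neqN1) ?(negPf i_neqNi).
Qed.

End KnCospectralStructure.

Theorem proposition8p6 (n : nat) : (1 <= n)%N ->
  (* each Y_{a,n-a} is H-cospectral with the complete digraph *)
  (forall a : nat, (1 <= a <= n - 1)%N ->
     forall z, Hspectrum (Yarc n a) z = Hspectrum (Kn n) z)
  (* these n digraphs are pairwise non-isomorphic *)
  /\ (forall a : nat, (1 <= a <= n - 1)%N -> ~ digraph_iso (Kn n) (Yarc n a))
  /\ (forall a b : nat, (1 <= a <= n - 1)%N -> (1 <= b <= n - 1)%N ->
        digraph_iso (Yarc n a) (Yarc n b) -> a = b)
  (* every digraph H-cospectral with the complete digraph is one of them *)
  /\ (forall (m : nat) (arc : rel 'I_m), is_digraph arc ->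
        (forall z, Hspectrum arc z = Hspectrum (Kn n) z) ->
        digraph_iso arc (Kn n) \/
        exists a : nat, (1 <= a <= n - 1)%N /\ digraph_iso arc (Yarc n a)).
Proof.
move=> n_gt0; split; first by move=> a _; apply: Yarc_cospectral.
have card_tails a : (1 <= a <= n - 1)%N -> #|single_arc_tails (Yarc n a)| = a.
  by case/andP=> _ a_le; rewrite single_arc_tails_Yarc ?card_ord_lt //; lia.
split.
  move=> a a_range /card_single_arc_tails_iso.
  by rewrite single_arc_tails_Kn cards0 card_tails //; move: a_range; lia.
split; first by move=> a b ha hb /card_single_arc_tails_iso; rewrite !card_tails.
move=> m arc arc_irr /cospectral_char_poly eq_char.
case: n n_gt0 card_tails eq_char => // n _ _ eq_char.
have m_eq : m = n.+1.
  by have := size_char_poly (Hmx arc); rewrite eq_char size_char_poly => -[].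
subst m; have [A arcE] := arc_two_blocks arc_irr (Kn_cospectral_sqr eq_char).
exact: two_block_iso arcE.
Qed.
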